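(* Let $G=K_S(r,s)$ be a complete split graph. Then the sparing number of $G$ equals the sparing number of a maximal clique in $G$.
   Context: A split graph is a graph whose vertex set can be partitioned into a clique $K_r$ and an independent set $S$. It is a complete split graph, denoted $K_S(r,s)$ with $r=|V(K_r)|$ and $s=|S|$, if every vertex of $S$ is adjacent to every vertex of $K_r$. Let $\mathbb{N}_0$ be the set of non-negative integers; for $A,B\subseteq\mathbb{N}_0$, $A+B=\{a+b:a\in A,b\in B\}$. An integer additive set-indexer (IASI) of a graph $G$ is an injective map $f:V(G)\to\mathcal{P}(\mathbb{N}_0)$ such that $f^+:E(G)\to\mathcal{P}(\mathbb{N}_0)$, $f^+(uv)=f(u)+f(v)$, is injective. A weak IASI is an IASI with $|f^+(uv)|=\max(|f(u)|,|f(v)|)$ for every edge $uv$. An edge $e$ is mono-indexed if $|f^+(e)|=1$. The sparing number $\varphi(G)$ is the minimum number of mono-indexed edges over all weak IASIs of $G$. *)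

From mathcomp Require Import all_boot all_order.
From mathcomp Require Import finmap.
Set Implicit Arguments. Unset Strict Implicit. Unset Printing Implicit Defensive.
Local Open Scope fset_scope.

(* A simple graph on a finite vertex type T is an adjacency relation [e];
   we only use symmetric irreflexive relations. *)

Definition sumset (A B : {fset nat}) : {fset nat} :=
  [fset (a + b)%N | a in A, b in B].

(* An integer additive set-indexer of the graph (T, e): an injective map
   f from vertices to nonempty finite subsets of N_0 whose induced edge map
   f^+(uv) = f(u) + f(v) is injective on (unordered) edges. *)
Definition is_IASI (T : finType) (e : rel T) (f : T -> {fset nat}) : Prop :=
  [/\ forall v, f v != fset0,
      injective f &
      forall u v u' v', e u v -> e u' v' ->
        sumset (f u) (f v) = sumset (f u') (f v') ->
        (u = u' /\ v = v') \/ (u = v' /\ v = u')].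

Definition is_weak_IASI (T : finType) (e : rel T) (f : T -> {fset nat}) : Prop :=
  is_IASI e f /\
  forall u v, e u v -> #|` sumset (f u) (f v)| = maxn #|` f u| #|` f v|.

Definition mono_edges (T : finType) (e : rel T) (f : T -> {fset nat}) : nat :=
  #|[set E : {set T} | [exists u, exists v,
       [&& E == [set u; v], e u v & #|` sumset (f u) (f v)| == 1%N]]]|.

Definition is_sparing_number (T : finType) (e : rel T) (k : nat) : Prop :=
  (exists f, is_weak_IASI e f /\ mono_edges e f = k) /\
  (forall f, is_weak_IASI e f -> k <= mono_edges e f).

(* The complete split graph with clique part K and independent part ~: K:
   x ~ y iff x <> y and at least one of them lies in K.
   It is K_S(r, s) with r = #|K| and s = #|~: K|. *)
Definition csplit (T : finType) (K : {set T}) : rel T :=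
  fun x y => (x != y) && ((x \in K) || (y \in K)).

Definition is_clique (T : finType) (e : rel T) (Q : {set T}) : bool :=
  [forall x in Q, forall y in Q, (x != y) ==> e x y].

Definition is_maximal_clique (T : finType) (e : rel T) (Q : {set T}) : Prop :=
  is_clique e Q /\ forall Q' : {set T}, is_clique e Q' -> Q \subset Q' -> Q' = Q.

Definition induced (T : finType) (e : rel T) (Q : {set T}) :
  rel {x : T | x \in Q} := fun x y => e (val x) (val y).
Arguments induced [T] e Q _ _.

From mathcomp Require Import all_boot all_order.
From mathcomp Require Import finmap zify.

Set Implicit Arguments.
Unset Strict Implicit.
Unset Printing Implicit Defensive.

(* On an edge of a weak IASI at most one end carries a non-singleton set, since
   |A + B| > max(|A|, |B|) as soon as |A|, |B| >= 2.  Hence the vertices with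
   non-singleton labels form an independent set, and the mono-indexed edges are
   exactly the edges between singleton-labelled vertices.  Conversely, labelling
   distinct vertices by distinct powers of two and doubling the labels of an
   independent set realises any independent set as the non-singleton part.  In
   K_S(r, s) this makes the sparing number C(w - 1, 2), where w is the size of a
   maximal clique (w = r + 1 if s > 0 and w = r otherwise), and a maximal clique
   is a complete graph K_w, whose sparing number is C(w - 1, 2) as well. *)

Lemma mem_sumset (A B : {fset nat}) x :
  reflect (exists a b, [/\ a \in A, b \in B & x = a + b]) (x \in sumset A B).
Proof.
apply: (iffP (imfset2P _ _ _ _ _)).
  by move=> [a aA [b bB ->]]; exists a, b.
by move=> [a [b [aA bB ->]]]; exists a => //; exists b.
Qed.

Lemma addn_mem_sumset (A B : {fset nat}) a b :
  a \in A -> b \in B -> a + b \in sumset A B.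
Proof. by move=> aA bB; apply/mem_sumset; exists a, b. Qed.

Lemma sumsetC (A B : {fset nat}) : sumset A B = sumset B A.
Proof.
by apply/fsetP => x; apply/mem_sumset/mem_sumset => -[a [b [aA bB ->]]];
  exists b, a; rewrite addnC.
Qed.

Lemma sumset1 (A : {fset nat}) b :
  sumset A [fset b]%fset = [fset (a + b)%N | a in A]%fset.
Proof.
apply/fsetP => x; apply/mem_sumset/imfsetP => [[a [c [aA /fset1P -> ->]]]|[a aA ->]].
  by exists a.
by exists a, b; rewrite fset11.
Qed.

Lemma card_imfset_addn (A : {fset nat}) b :
  #|` [fset (a + b)%N | a in A]%fset| = #|` A|.
Proof. by rewrite card_in_imfset //= => x y _ _ /addIn. Qed.

Lemma card_sumset1 (A : {fset nat}) b : #|` sumset A [fset b]%fset| = #|` A|.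
Proof. by rewrite sumset1 card_imfset_addn. Qed.

Lemma leq_card_sumsetl (A B : {fset nat}) b : b \in B -> #|` A| <= #|` sumset A B|.
Proof.
move=> bB; rewrite -(card_imfset_addn A b) -sumset1; apply: fsubset_leq_card.
by apply/fsubsetP => x /mem_sumset [a [c [aA /fset1P -> ->]]]; apply: addn_mem_sumset.
Qed.

Lemma ltn_card_sumsetr (A B : {fset nat}) :
  1 < #|` A| -> B != fset0 -> #|` B| < #|` sumset A B|.
Proof.
move=> A_gt1 /fset0Pn B_neq0.
have [a0 [a1 [a0A a1A lt01]]] : exists a0 a1, [/\ a0 \in A, a1 \in A & a0 < a1].
  have [a a_A] : exists a, a \in A by apply/fset0Pn; rewrite -cardfs_gt0; lia.
  have /fset0Pn [a'] : (A `\ a)%fset != fset0.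
    by rewrite -cardfs_gt0; move: A_gt1; rewrite (cardfsD1 a A) a_A.
  rewrite in_fsetD1 => /andP [a'a a'A].
  by case: (ltngtP a a') a'a => // lt_aa' _; [exists a, a' | exists a', a].
have [bm bmB bm_min] := ex_minnP B_neq0.
(* [a0 + bm] is the sum not reached by the translate [B + a1]. *)
have bm_new : (a0 + bm)%N \notin [fset (b + a1)%N | b in B]%fset.
  by apply/imfsetP => -[b /= /bm_min]; lia.
rewrite sumsetC -(card_imfset_addn B a1).
apply: (@leq_trans #|` ((a0 + bm)%N |` [fset (b + a1)%N | b in B])%fset|).
  by rewrite cardfsU1 bm_new.
apply: fsubset_leq_card; apply/fsubsetP => x.
rewrite in_fset1U => /orP [/eqP ->|/imfsetP [b /= bB ->]].
  by rewrite sumsetC addn_mem_sumset.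
by rewrite addnC sumsetC addn_mem_sumset.
Qed.

Lemma card_sumset_eq1 (A B : {fset nat}) : A != fset0 -> B != fset0 ->
  #|` sumset A B| = 1 -> #|` A| = 1 /\ #|` B| = 1.
Proof.
move=> A_neq0 B_neq0 AB1.
have /fset0Pn [a aA] := A_neq0; have /fset0Pn [b bB] := B_neq0.
have := leq_card_sumsetl A bB; have := leq_card_sumsetl B aA.
by move: A_neq0 B_neq0; rewrite -!cardfs_gt0 sumsetC AB1; lia.
Qed.

Lemma expn2_addn_inj_lt i j k l : i < j -> k < l ->
  2 ^ i + 2 ^ j = 2 ^ k + 2 ^ l -> i = k /\ j = l.
Proof.
move=> lt_ij lt_kl E.
have lt_ij2 : 2 ^ i < 2 ^ j by rewrite ltn_exp2l.
have lt_kl2 : 2 ^ k < 2 ^ l by rewrite ltn_exp2l.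
have jl : j = l.
  case: (ltngtP j l) => // [lt_jl|lt_lj].
  - have : 2 ^ j.+1 <= 2 ^ l by rewrite leq_exp2l.
    by rewrite expnS; lia.
  - have : 2 ^ l.+1 <= 2 ^ j by rewrite leq_exp2l.
    by rewrite expnS; lia.
subst l; split=> //; apply: (expnI (isT : 1 < 2)); lia.
Qed.

Lemma expn2_addn_inj i j k l : i != j -> k != l ->
  2 ^ i + 2 ^ j = 2 ^ k + 2 ^ l -> (i = k /\ j = l) \/ (i = l /\ j = k).
Proof.
move=> + + E; case: (ltngtP i j) => // lt_ij _; case: (ltngtP k l) => // lt_kl _.
- by left; apply: expn2_addn_inj_lt.
- by right; apply: expn2_addn_inj_lt; rewrite // E addnC.
- by right; case: (expn2_addn_inj_lt lt_ij lt_kl); rewrite // addnC E.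
- by left; case: (expn2_addn_inj_lt lt_ij lt_kl); rewrite // addnC E addnC.
Qed.

Lemma cliqueP (T : finType) (e : rel T) (Q : {set T}) :
  reflect {in Q &, forall x y, x != y -> e x y} (is_clique e Q).
Proof.
apply: (iffP forallP) => [Qcl x y xQ yQ|Qcl x].
  by have /implyP/(_ xQ)/forallP/(_ y)/implyP/(_ yQ)/implyP := Qcl x.
by apply/implyP => xQ; apply/forallP => y; apply/implyP => yQ; apply/implyP; apply: Qcl.
Qed.

Section WeakIASI.

Variables (T : finType) (e : rel T).

Definition singletons (f : T -> {fset nat}) : {set T} := [set v | #|` f v| == 1].

Lemma weak_IASI_edge_singleton f u v :
  is_weak_IASI e f -> e u v -> (u \in singletons f) || (v \in singletons f).
Proof.
move=> [[f_neq0 _ _] f_weak] euv; rewrite !inE.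
have := f_neq0 u; have := f_neq0 v; rewrite -!cardfs_gt0 => fv_gt0 fu_gt0.
apply/negPn/negP; rewrite negb_or => /andP [fu1 fv1].
have fu_gt1 : 1 < #|` f u| by move: fu1; rewrite eqn_leq fu_gt0 andbT -ltnNge.
have fv_gt1 : 1 < #|` f v| by move: fv1; rewrite eqn_leq fv_gt0 andbT -ltnNge.
have := ltn_card_sumsetr fu_gt1 (f_neq0 v).
have := ltn_card_sumsetr fv_gt1 (f_neq0 u); rewrite sumsetC (f_weak _ _ euv).
lia.
Qed.

Lemma leq_bin2_mono_edges f (C : {set T}) :
  is_clique e C -> C \subset singletons f -> 'C(#|C|, 2) <= mono_edges e f.
Proof.
move=> /cliqueP Ccl C1; rewrite -cards_draws; apply: subset_leq_card.
apply/subsetP => E; rewrite !inE => /andP [EC /cards2P [x [y [xy Exy]]]].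
have xC : x \in C by apply: (subsetP EC); rewrite Exy !inE eqxx.
have yC : y \in C by apply: (subsetP EC); rewrite Exy !inE eqxx orbT.
apply/existsP; exists x; apply/existsP; exists y; rewrite Exy eqxx Ccl //=.
have := subsetP C1 _ xC; have := subsetP C1 _ yC; rewrite !inE.
by move=> /cardfs1P [b ->] /cardfs1P [a ->]; rewrite card_sumset1 cardfs1.
Qed.

Lemma mono_edges_leq_bin2 f : irreflexive e -> (forall v, f v != fset0) ->
  mono_edges e f <= 'C(#|singletons f|, 2).
Proof.
move=> e_irr f_neq0; rewrite -cards_draws; apply: subset_leq_card.
apply/subsetP => E; rewrite !inE.
move=> /existsP [u /existsP [v /and3P [/eqP -> euv /eqP fuv1]]].
have uv : u != v by apply: contraTneq euv => ->; rewrite e_irr.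
have [fu1 fv1] := card_sumset_eq1 (f_neq0 u) (f_neq0 v) fuv1.
rewrite cards2 uv eqxx andbT; apply/subsetP => x.
by rewrite !inE => /orP [] /eqP ->; rewrite ?fu1 ?fv1.
Qed.

Lemma weak_IASI_nbr_singletons f k : is_weak_IASI e f -> k \notin singletons f ->
  [set v | e k v] \subset singletons f.
Proof.
move=> f_weak kS; apply/subsetP => v; rewrite inE => ekv.
by have := weak_IASI_edge_singleton f_weak ekv; rewrite (negbTE kS).
Qed.

End WeakIASI.

Section SplitLabelling.

Variables (T : finType) (e : rel T) (I : {set T}).
Hypotheses (e_irr : irreflexive e) (I_indep : {in I &, forall u v, ~~ e u v}).

Let p (v : T) : nat := 2 ^ enum_rank v.
Let N : nat := 2 ^ #|T|.

Definition split_label (v : T) : {fset nat} :=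
  if v \in I then [fset p v; (p v + N)%N]%fset else [fset p v]%fset.

Let p_inj : injective p.
Proof. by move=> u v /(expnI (isT : 1 < 2))/val_inj/enum_rank_inj. Qed.

Let p_ltn_N v : p v < N.
Proof. by rewrite ltn_exp2l. Qed.

Let mem_split_label v x : x \in split_label v -> x = p v \/ x = (p v + N)%N.
Proof.
rewrite /split_label; case: (v \in I).
  by rewrite in_fset2 => /orP [] /eqP ->; [left|right].
by rewrite in_fset1 => /eqP ->; left.
Qed.

Let p_mem_split_label v : p v \in split_label v.
Proof. by rewrite /split_label; case: (v \in I); rewrite ?in_fset2 ?in_fset1 eqxx. Qed.

Let split_label_neq0 v : split_label v != fset0.
Proof. by apply/fset0Pn; exists (p v). Qed.

Lemma singletons_split_label : singletons split_label = ~: I.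
Proof.
apply/setP => v; rewrite !inE /split_label; case: (v \in I); last by rewrite cardfs1.
by rewrite cardfs2; case: eqP => //; lia.
Qed.

Let split_label_notin v : v \notin I -> split_label v = [fset p v]%fset.
Proof. by rewrite /split_label => /negbTE ->. Qed.

(* Every sum of labels of [u] and [v] is at least [p u + p v], which is one of
   them; so the sumset determines [p u + p v], hence the pair {u, v}. *)
Let sumset_split_label_min u v u' v' :
  sumset (split_label u) (split_label v) = sumset (split_label u') (split_label v') ->
  (p u + p v = p u' + p v')%N.
Proof.
have lb a b x : x \in sumset (split_label a) (split_label b) -> (p a + p b <= x)%N.
  by move/mem_sumset => [x1 [x2 [/mem_split_label h1 /mem_split_label h2 ->]]];
    case: h1; case: h2; lia.
move=> E; apply/eqP; rewrite eqn_leq; apply/andP.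
by split; apply: lb; [rewrite E | rewrite -E]; apply: addn_mem_sumset.
Qed.

Lemma split_label_IASI : is_IASI e split_label.
Proof.
split=> [//|u v E|u v u' v' euv eu'v' /sumset_split_label_min E].
  apply: p_inj; have := p_mem_split_label u; rewrite E.
  by case/mem_split_label => //; have := p_ltn_N u; lia.
have rank_neq a b : e a b -> nat_of_ord (enum_rank a) != enum_rank b.
  by move=> eab; apply: contraTneq eab => /val_inj/enum_rank_inj ->; rewrite e_irr.
have [[ik jl]|[il jk]] := expn2_addn_inj (rank_neq _ _ euv) (rank_neq _ _ eu'v') E.
  by left; split; apply: p_inj; rewrite /p ?ik ?jl.
by right; split; apply: p_inj; rewrite /p ?il ?jk.
Qed.

Lemma split_label_weak_IASI : is_weak_IASI e split_label.
Proof.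
split=> [|u v euv]; first exact: split_label_IASI.
have card_gt0 w : 0 < #|` split_label w| by rewrite cardfs_gt0.
have [uI|uI] := boolP (u \in I).
  have vI : v \notin I by apply: contraTN euv => vI; apply: I_indep.
  by rewrite (split_label_notin vI) card_sumset1 cardfs1; have := card_gt0 u; lia.
rewrite sumsetC (split_label_notin uI) card_sumset1 cardfs1.
by have := card_gt0 v; lia.
Qed.

End SplitLabelling.

Lemma sparing_number_bin2 (T : finType) (e : rel T) (I : {set T}) :
  irreflexive e -> {in I &, forall u v, ~~ e u v} -> is_clique e (~: I) ->
  (forall f, is_weak_IASI e f ->
     exists C, [/\ is_clique e C, C \subset singletons f & #|~: I| <= #|C|]) ->
  is_sparing_number e 'C(#|~: I|, 2).
Proof.
move=> e_irr I_indep Icl large_clique; split=> [|f f_weak].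
  have label_weak := split_label_weak_IASI e_irr I_indep.
  have [[label_neq0 _ _] _] := label_weak.
  exists (split_label I); split=> //; apply/eqP; rewrite eqn_leq.
  rewrite -{1}(singletons_split_label I) mono_edges_leq_bin2 //=.
  by rewrite leq_bin2_mono_edges // singletons_split_label.
have [C [Ccl C1 I_leC]] := large_clique f f_weak.
by apply: leq_trans (leq_bin2_mono_edges Ccl C1); apply: leq_bin2l.
Qed.

Lemma complete_sparing_number (T : finType) (e : rel T) :
  (forall x y, e x y = (x != y)) -> is_sparing_number e 'C(#|T|.-1, 2).
Proof.
move=> eE.
have e_irr : irreflexive e by move=> x; rewrite eE eqxx.
have e_clique (C : {set T}) : is_clique e C by apply/cliqueP => x y _ _; rewrite eE.
have [I [I_indep cardI]] : exists I : {set T},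
    {in I &, forall u v, ~~ e u v} /\ #|~: I| = #|T|.-1.
  have [T0|[k0 _]] := set_0Vmem [set: T].
    by exists set0; split=> [u|]; rewrite ?inE // setC0 -cardsT T0 cards0.
  by exists [set k0]; split=> [u v /set1P -> /set1P ->|]; rewrite ?e_irr ?cardsC1.
rewrite -cardI; apply: sparing_number_bin2 (e_clique _) _ => // f f_weak.
rewrite cardI; have [T1|/subsetPn [k _ kS]] := boolP ([set: T] \subset singletons f).
  by exists [set: T]; rewrite cardsT leq_pred.
exists [set~ k]; split; rewrite ?cardsC1 //.
apply: subset_trans (weak_IASI_nbr_singletons f_weak kS).
by apply/subsetP => v; rewrite !inE eE eq_sym.
Qed.

Lemma induced_clique (T : finType) (e : rel T) (Q : {set T}) :
  irreflexive e -> is_clique e Q -> forall x y, induced e Q x y = (x != y).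
Proof.
move=> e_irr /cliqueP Qcl x y; rewrite /induced.
have [->|xy] := eqVneq x y; first by rewrite e_irr.
by apply: Qcl; rewrite ?(valP x) ?(valP y) ?(inj_eq val_inj).
Qed.

Lemma maximal_clique_setU1 (T : finType) (e : rel T) (Q : {set T}) x :
  is_maximal_clique e Q -> is_clique e (x |: Q) -> x \in Q.
Proof. by move=> [_ Qmax] xQcl; rewrite -(Qmax _ xQcl (subsetUr _ _)) setU11. Qed.

Section CompleteSplitGraph.

Variables (T : finType) (K : {set T}).

Lemma csplit_irr : irreflexive (csplit K).
Proof. by move=> x; rewrite /csplit eqxx. Qed.

Lemma csplit_clique_setU1 (Q : {set T}) x : is_clique (csplit K) Q ->
  (x \in K) || (Q \subset K) -> is_clique (csplit K) (x |: Q).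
Proof.
move=> /cliqueP Qcl xKQ; apply/cliqueP => a b.
have adj z : z \in Q -> z != x -> csplit K x z && csplit K z x.
  move=> zQ zx; rewrite /csplit zx eq_sym zx /=.
  by case/orP: xKQ => [->|/subsetP/(_ z zQ) ->]; rewrite ?orbT.
rewrite !inE => /predU1P [->|aQ] /predU1P [->|bQ] ab.
- by rewrite eqxx in ab.
- by rewrite eq_sym in ab; case/andP: (adj b bQ ab).
- by case/andP: (adj a aQ ab).
- exact: Qcl.
Qed.

Lemma csplit_clique : is_clique (csplit K) K.
Proof. by apply/cliqueP => x y xK _ xy; rewrite /csplit xy xK. Qed.

Lemma csplit_sparing_number x0 :
  x0 \notin K -> is_sparing_number (csplit K) 'C(#|K|, 2).
Proof.
move=> x0K; rewrite -[in 'C(_, _)](setCK K).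
apply: sparing_number_bin2 csplit_irr _ _ _; rewrite ?setCK ?csplit_clique //.
  by move=> u v; rewrite !inE => /negbTE uK /negbTE vK; rewrite /csplit uK vK andbF.
move=> f f_weak; have [K1|/subsetPn [k kK kS]] := boolP (K \subset singletons f).
  by exists K; rewrite csplit_clique.
have x0k : x0 != k by apply: contraNneq x0K => ->.
exists (x0 |: (K :\ k)); split.
- apply: csplit_clique_setU1; last by rewrite subD1set orbT.
  by apply/cliqueP => x y /setD1P [_ xK] _ xy; rewrite /csplit xy xK.
- apply: subset_trans (weak_IASI_nbr_singletons f_weak kS).
  apply/subsetP => v; rewrite !inE /csplit kK => /predU1P [->|/andP [vk _]].
    by rewrite eq_sym x0k.
  by rewrite eq_sym vk.
- by rewrite cardsU1 !inE (negbTE x0K) andbF (cardsD1 k K) kK.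
Qed.

Variable Q : {set T}.
Hypothesis Q_max : is_maximal_clique (csplit K) Q.

Lemma csplit_maximal_clique_sub : K \subset Q.
Proof.
apply/subsetP => k kK; apply: maximal_clique_setU1 Q_max _.
by apply: csplit_clique_setU1; rewrite ?kK //; case: Q_max.
Qed.

Lemma csplit_maximal_cliqueE x0 : x0 \notin K -> exists2 y, y \notin K & Q = y |: K.
Proof.
move=> x0K; have [Qcl _] := Q_max.
have [y yQ yK] : exists2 y, y \in Q & y \notin K.
  apply/exists_inP; apply: contraNT x0K => /exists_inPn QK.
  have QsubK : Q \subset K by apply/subsetP => z /QK; rewrite negbK.
  apply: (subsetP QsubK); apply: maximal_clique_setU1 Q_max _.
  by apply: csplit_clique_setU1; rewrite // QsubK orbT.
exists y => //; apply/setP => z; rewrite !inE.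
apply/idP/predU1P => [zQ|[->|/(subsetP csplit_maximal_clique_sub)] //].
have [zK|zK] := boolP (z \in K); [by right | left].
apply: contraNeq zK => zy; move/cliqueP: Qcl => /(_ z y zQ yQ zy).
by rewrite /csplit (negbTE yK) orbF => /andP [].
Qed.

End CompleteSplitGraph.

Theorem theorem2p6 (T : finType) (K : {set T}) (Q : {set T}) :
  is_maximal_clique (csplit K) Q ->
  exists k : nat,
    is_sparing_number (csplit K) k /\ is_sparing_number (induced (csplit K) Q) k.
Proof.
move=> Q_max.
have Q_sparing := complete_sparing_number (induced_clique (@csplit_irr _ K) Q_max.1).
have card_Q : #|{: {x | x \in Q}}| = #|Q| by rewrite card_sig; apply: eq_card.
rewrite card_Q in Q_sparing.
have [/existsP [x0 x0K]|/existsPn allK] := boolP [exists x, x \notin K].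
  have [y yK QE] := csplit_maximal_cliqueE Q_max x0K.
  exists 'C(#|K|, 2); split; first exact: csplit_sparing_number x0K.
  by move: Q_sparing; rewrite QE cardsU1 yK.
have KT : K = [set: T] by apply/setP => z; rewrite inE; have := allK z; rewrite negbK.
have QT : Q = [set: T].
  by apply/eqP; rewrite eqEsubset subsetT -KT csplit_maximal_clique_sub.
exists 'C(#|T|.-1, 2); split; last by move: Q_sparing; rewrite QT cardsT.
by apply: complete_sparing_number => x y; rewrite /csplit KT inE andbT.
Qed.
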